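(* Let $F=F(N,\mathcal D)$ be a connected GSC and let $i\in\mathcal D$. If there is exactly one word $\mathbf w\in\mathcal D^2$ such that the level-3 cell $\varphi_{i\mathbf w}(F)$ intersects $\bigcup_{j\in\mathcal D\setminus\{i\}}\varphi_j(F)$, then $F$ is fragile.
   Context: GSC: $N\ge2$, $\mathcal D\subset\{0,\dots,N-1\}^2$ with $1<|\mathcal D|<N^2$, $\varphi_i(x)=\frac1N(x+i)$, $F$ the attractor $F=\bigcup_{i\in\mathcal D}\varphi_i(F)$; $\varphi_{i_1\cdots i_k}=\varphi_{i_1}\circ\cdots\circ\varphi_{i_k}$; a level-$k$ cell is a set $\varphi_{\mathbf i}(F)$ with $\mathbf i\in\mathcal D^k$. $F$ is fragile if there is a partition $\mathcal D=\mathcal D_1\cup\mathcal D_2$ into disjoint nonempty sets with $\big(\bigcup_{i\in\mathcal D_1}\varphi_i(F)\big)\cap\big(\bigcup_{i\in\mathcal D_2}\varphi_i(F)\big)$ a singleton. *)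

From HB Require Import structures.
From mathcomp Require Import all_boot all_order all_algebra.
From mathcomp Require Import all_classical all_reals all_analysis.
Set Implicit Arguments. Unset Strict Implicit. Unset Printing Implicit Defensive.
Import Order.TTheory GRing.Theory Num.Theory.
Import numFieldNormedType.Exports.
Local Open Scope classical_set_scope.
Local Open Scope ring_scope.

Definition digit (N : nat) := ('I_N * 'I_N)%type.

Definition phi (R : realType) (N : nat) (i : digit N) (x : R * R) : R * R :=
  ((x.1 + (i.1 : nat)%:R) / N%:R, (x.2 + (i.2 : nat)%:R) / N%:R).

Definition union_cells (R : realType) (N : nat) (A : {set digit N})
  (F : set (R * R)) : set (R * R) :=
  \bigcup_(i in [set j | j \in A]) (@phi R N i @` F).

Definition is_attractor (R : realType) (N : nat) (D : {set digit N})
  (F : set (R * R)) : Prop :=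
  F !=set0 /\ compact F /\ F = union_cells D F.

Definition fragile (R : realType) (N : nat) (D : {set digit N})
  (F : set (R * R)) : Prop :=
  exists D1 D2 : {set digit N},
    finset.setI D1 D2 = finset.set0 /\ finset.setU D1 D2 = D /\ (0 < #|D1|)%N /\ (0 < #|D2|)%N /\
    exists x : R * R, union_cells D1 F `&` union_cells D2 F = [set x].

From HB Require Import structures.
From mathcomp Require Import all_boot all_order all_algebra.
From mathcomp Require Import all_classical all_reals all_analysis.
From mathcomp Require Import lra zify ring.
Import Order.TTheory GRing.Theory Num.Theory.
Import numFieldNormedType.Exports.
Local Open Scope classical_set_scope.
Local Open Scope ring_scope.
Set Implicit Arguments.
Unset Strict Implicit.
Unset Printing Implicit Defensive.

(* Let G be the set of points x of F such that phi_i(x) lies in some phi_j(F)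
   with j <> i; the cell phi_i(F) meets the other level-1 cells exactly in
   phi_i(G), so it suffices to show that G is a single point.  Comparing base-N
   expansions coordinatewise, if phi_d(y) is in G then y is in G or y is a
   corner of the unit square.  By hypothesis every point of G lies in the cell
   phi_{w1 w2}(F).  If w1 = w2 = c, this makes G invariant under phi_c (a corner
   of the unit square lying in phi_c(F) is fixed by phi_c), and since phi_c
   contracts by 1/N, G is a point.  If w1 <> w2, every point of G is phi_w1(y)
   with y a corner of the unit square inside phi_w2(F), and a square of side
   1/N < 1 contains at most one such corner. *)

Section DigitMaps.
Variables (R : realType) (N : nat).
Hypothesis N2 : (2 <= N)%N.

Definition psi (k : nat) (t : R) : R := (t + k%:R) / N%:R.

Definition endpoint (t : R) := t = 0 \/ t = 1.

Let N_neq0 : (N%:R : R) != 0.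
Proof. by rewrite pnatr_eq0; lia. Qed.

Let N_ge2 : 2 <= (N%:R : R).
Proof. by rewrite ler_nat. Qed.

Lemma le0_of_expn_bounded (t M : R) : (forall n, N%:R ^+ n * t <= M) -> t <= 0.
Proof.
move=> bounded; rewrite leNgt; apply/negP => t_gt0.
have M_t_ge0 : 0 <= `|M| / t by rewrite divr_ge0 // ltW.
set n := Num.Def.archi_bound (`|M| / t).
have n_gt : `|M| < n%:R * t by rewrite -ltr_pdivrMr // archi_boundP.
have n_lt : n%:R < (N%:R : R) ^+ n by rewrite -natrX ltr_nat ltn_expl.
have := bounded n; have := ler_norm M.
have : n%:R * t < N%:R ^+ n * t by rewrite ltr_pM2r.
lra.
Qed.

Lemma eq_psi a b t t' : psi a t = psi b t' -> t + a%:R = t' + b%:R.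
Proof. by move/(congr1 ( *%R^~ N%:R)); rewrite !mulfVK. Qed.

Lemma psi_psi k d t : psi k (psi d t) = psi (d + N * k) t / N%:R.
Proof. by rewrite /psi natrD natrM; field. Qed.

Lemma unit_shift_cases (a b : nat) (y y' : R) :
  0 <= y <= 1 -> 0 <= y' <= 1 -> y + a%:R = y' + b%:R ->
  [\/ a = b /\ y = y', b = a.+1 /\ y = 1 /\ y' = 0
    | a = b.+1 /\ y = 0 /\ y' = 1].
Proof.
wlog ab : a b y y' / (a <= b)%N => [hwlog|] y01 y'01 E.
  have [/hwlog|/ltnW/hwlog] := leqP a b; first exact.
  by move=> /(_ y' y y'01 y01 (esym E)) [[-> ->]|[-> [-> ->]]|[-> [-> ->]]];
    [constructor 1|constructor 3|constructor 2].
move: y01 y'01 E => /andP[y0 y1] /andP[y'0 y'1].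
rewrite -(subnKC ab) natrD.
case: (b - a)%N => [|[|k]] E.
- by constructor 1; split; [lia | lra].
- by constructor 2; split; [lia | lra].
- have : 2 <= (k.+2)%:R :> R by rewrite ler_nat.
  lra.
Qed.

Lemma endpoint_of_psi_eq i j y y' : 0 <= y <= 1 -> 0 <= y' <= 1 ->
  psi i y = psi j y' -> i <> j -> endpoint y.
Proof.
move=> y01 y'01 /eq_psi E ij.
by case: (unit_shift_cases y01 y'01 E) => [[]|[_ []]|[_ []]]; [|right|left].
Qed.

Lemma psi_psi_eq i j d d' y y' : (d < N)%N -> (d' < N)%N ->
  0 <= y <= 1 -> 0 <= y' <= 1 -> psi i (psi d y) = psi j (psi d' y') ->
  psi i y = psi j y' \/ (i = j /\ endpoint y).
Proof.
move=> dN d'N y01 y'01.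
(* Compare the integer parts d + N i and d' + N j of the two base-N expansions. *)
rewrite !psi_psi => /(mulIf (invr_neq0 N_neq0))/eq_psi E.
have [ij|ij] := eqVneq i j; first (case: (unit_shift_cases y01 y'01 E)).
- by move=> [_ ->]; left; rewrite ij.
- by move=> [_ [-> _]]; right; split => //; right.
- by move=> [_ [-> _]]; right; split => //; left.
- left; rewrite /psi; case: (unit_shift_cases y01 y'01 E).
  + by move=> [ijd _]; exfalso; move/eqP: ij; nia.
  + move=> [ijd [-> ->]]; have -> : j = i.+1 by nia.
    by rewrite add0r addrC natr1.
  + move=> [ijd [-> ->]]; have -> : i = j.+1 by nia.
    by rewrite add0r addrC natr1.
Qed.

Lemma psi_endpoint_fixed e q : (e < N)%N -> 0 <= q <= 1 ->
  endpoint (psi e q) -> psi e q = q.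
Proof.
move=> eN /andP[q0 q1] h.
have eN' : e%:R + 1 <= N%:R :> R by rewrite natr1 ler_nat.
have e0 : 0 <= e%:R :> R by [].
case: h => h; rewrite h; move: h => /(congr1 ( *%R^~ N%:R)); rewrite mulfVK //.
  by rewrite mul0r; lra.
by rewrite mul1r; lra.
Qed.

Lemma psi_endpoint_unique e q q' : 0 <= q <= 1 -> 0 <= q' <= 1 ->
  endpoint (psi e q) -> endpoint (psi e q') -> psi e q = psi e q'.
Proof.
move=> /andP[q0 q1] /andP[q'0 q'1].
have e0 : 0 <= e%:R :> R by [].
have psi_eq t c : psi e t = c -> t + e%:R = c * N%:R.
  by move/(congr1 ( *%R^~ N%:R)); rewrite mulfVK.
by case=> /[dup] /psi_eq E ->; case=> /[dup] /psi_eq E' ->;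
  rewrite ?mul0r ?mul1r in E E'; have := N_ge2; lra.
Qed.

Lemma unit_interval_of_self_similar (A : set R) (M : R) :
  (forall s, A s -> `|s| <= M) -> A `<=` \bigcup_(d < N) psi d @` A ->
  forall s, A s -> 0 <= s <= 1.
Proof.
move=> A_bounded A_cover.
have bound n s : A s -> - M <= N%:R ^+ n * s /\ N%:R ^+ n * (s - 1) <= M.
  elim: n s => [|n IH] s As.
    by rewrite expr0 !mul1r; move: (A_bounded s As); rewrite ler_norml; lra.
  have [d /= dN [t At <-]] := A_cover s As.
  have [IH1 IH2] := IH t At.
  have d0 : 0 <= N%:R ^+ n * d%:R :> R by rewrite mulr_ge0 ?exprn_ge0.
  have dN' : N%:R ^+ n * (d%:R + 1) <= N%:R ^+ n * N%:R :> R.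
    by rewrite ler_wpM2l ?exprn_ge0 // natr1 ler_nat.
  have -> : N%:R ^+ n.+1 * psi d t = N%:R ^+ n * t + N%:R ^+ n * d%:R.
    by rewrite exprSr /psi; field.
  have -> : N%:R ^+ n.+1 * (psi d t - 1) =
      N%:R ^+ n * (t - 1) + N%:R ^+ n * (d%:R + 1) - N%:R ^+ n * N%:R.
    by rewrite exprSr /psi; field.
  split; lra.
move=> s As.
have s_ge0 : - s <= 0.
  by apply: (le0_of_expn_bounded (M := M)) => n; have [] := bound n s As; lra.
have s_le1 : s - 1 <= 0.
  by apply: (le0_of_expn_bounded (M := M)) => n; case: (bound n s As).
by apply/andP; split; lra.
Qed.

Lemma psi_invariant_subset1 (A : set R) (c : nat) :
  (forall s, A s -> 0 <= s <= 1) -> A `<=` psi c @` A -> is_subset1 A.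
Proof.
move=> A01 A_sub.
have bound n s s' : A s -> A s' -> N%:R ^+ n * `|s - s'| <= 1.
  elim: n s s' => [|n IH] s s' As As'.
    have /andP[? ?] := A01 s As; have /andP[? ?] := A01 s' As'.
    by rewrite expr0 mul1r ler_norml; apply/andP; split; lra.
  have [t At <-] := A_sub s As; have [t' At' <-] := A_sub s' As'.
  have -> : psi c t - psi c t' = (t - t') / N%:R by rewrite /psi; field.
  rewrite normrM normfV (ger0_norm (ler0n _ N)).
  have -> : N%:R ^+ n.+1 * (`|t - t'| / N%:R) = N%:R ^+ n * `|t - t'|.
    by rewrite exprSr; field.
  exact: IH.
move=> s s' As As'; apply/eqP; rewrite -subr_eq0 -normr_le0.
by apply: (le0_of_expn_bounded (M := 1)) => n; apply: bound.
Qed.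

End DigitMaps.

Lemma eq_digit (N : nat) (i j : digit N) :
  (i.1 : nat) = j.1 -> (i.2 : nat) = j.2 -> i = j.
Proof. by case: i j => [a b] [c e] /= /val_inj-> /val_inj->. Qed.

Definition unit_square (R : realType) : set (R * R) :=
  [set x | 0 <= x.1 <= 1 /\ 0 <= x.2 <= 1].

Definition corner (R : realType) (x : R * R) := endpoint x.1 /\ endpoint x.2.

Lemma phi_invariant_subset1 (R : realType) (N : nat) (A : set (R * R))
    (c : digit N) :
  (2 <= N)%N -> A `<=` @unit_square R -> A `<=` phi c @` A -> is_subset1 A.
Proof.
move=> N2 A_sq A_sub x x' Ax Ax'.
have A1 : is_subset1 (fst @` A).
  apply: (psi_invariant_subset1 N2 (c := c.1)) => [_ [y Ay <-]|_ [y Ay <-]].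
    by case: (A_sq y Ay).
  by have [z Az <-] := A_sub y Ay; exists z.1 => //; exists z.
have A2 : is_subset1 (snd @` A).
  apply: (psi_invariant_subset1 N2 (c := c.2)) => [_ [y Ay <-]|_ [y Ay <-]].
    by case: (A_sq y Ay).
  by have [z Az <-] := A_sub y Ay; exists z.2 => //; exists z.
have e1 : x.1 = x'.1 by apply: A1; [exists x | exists x'].
have e2 : x.2 = x'.2 by apply: A2; [exists x | exists x'].
by case: x x' {Ax Ax'} e1 e2 => [? ?] [? ?] /= -> ->.
Qed.

Section Attractor.
Variables (R : realType) (N : nat) (D : {set digit N}) (F : set (R * R)).
Hypotheses (N2 : (2 <= N)%N) (F_attractor : is_attractor D F).

Lemma phiE (i : digit N) (x : R * R) : phi i x = (psi N i.1 x.1, psi N i.2 x.2).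
Proof. by []. Qed.

Lemma attractor_cover x : F x -> exists d y, [/\ d \in D, F y & x = phi d y].
Proof.
case: F_attractor => _ [_ F_eq] Fx.
have [d dD [y Fy <-]] : union_cells D F x by rewrite -F_eq.
by exists d, y.
Qed.

Lemma attractor_phi d y : d \in D -> F y -> F (phi d y).
Proof.
by case: F_attractor => _ [_ F_eq] dD Fy; rewrite F_eq; exists d => //; exists y.
Qed.

Lemma attractor_sub_unit_square : F `<=` @unit_square R.
Proof.
have [M M_bound] : exists M : R, forall x, F x -> `|x.1| <= M /\ `|x.2| <= M.
  case: F_attractor => _ [/compact_bounded [M [_ M_bound]] _].
  exists (M + 1) => y Fy; apply/andP; rewrite -ge_max.
  by apply: (M_bound (M + 1)); rewrite ?ltrDl.
move=> x Fx; split.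
- apply: (unit_interval_of_self_similar N2 (M := M) (A := fst @` F)); last by exists x.
    by move=> _ [y Fy <-]; case: (M_bound y Fy).
  move=> _ [y Fy <-]; have [d [z [dD Fz ->]]] := attractor_cover Fy.
  by exists d.1; [exact: ltn_ord | exists z.1 => //; exists z].
- apply: (unit_interval_of_self_similar N2 (M := M) (A := snd @` F)); last by exists x.
    by move=> _ [y Fy <-]; case: (M_bound y Fy).
  move=> _ [y Fy <-]; have [d [z [dD Fz ->]]] := attractor_cover Fy.
  by exists d.2; [exact: ltn_ord | exists z.2 => //; exists z].
Qed.

Lemma cell_corner_fixed (e : digit N) q : F q -> corner (phi e q) -> phi e q = q.
Proof.
move=> /attractor_sub_unit_square[q1 q2] [c1 c2].
rewrite phiE (psi_endpoint_fixed N2 (ltn_ord _) q1 c1).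
by rewrite (psi_endpoint_fixed N2 (ltn_ord _) q2 c2) -surjective_pairing.
Qed.

Lemma cell_corner_unique (e : digit N) q q' : F q -> F q' ->
  corner (phi e q) -> corner (phi e q') -> phi e q = phi e q'.
Proof.
move=> /attractor_sub_unit_square[q1 q2] /attractor_sub_unit_square[q'1 q'2].
move=> [c1 c2] [c'1 c'2]; rewrite !phiE.
by rewrite (psi_endpoint_unique N2 q1 q'1 c1 c'1) (psi_endpoint_unique N2 q2 q'2 c2 c'2).
Qed.

Section Contact.
Variable i : digit N.

Definition contact := [set x | F x /\ union_cells (D :\ i) F (phi i x)].

Lemma contact_shift d y : d \in D -> F y -> contact (phi d y) -> contact y \/ corner y.
Proof.
move=> dD Fy [_ [j /= jDi [z Fz Ez]]].
have [d' [y' [d'D Fy' Ez']]] := attractor_cover Fz; subst z.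
have ij : i <> j by move=> eij; rewrite eij !inE eqxx in jDi.
have [y1 y2] := attractor_sub_unit_square Fy.
have [y'1 y'2] := attractor_sub_unit_square Fy'.
move: Ez; rewrite !phiE => -[/esym E1 /esym E2].
case: (psi_psi_eq N2 (ltn_ord _) (ltn_ord _) y1 y'1 E1) => [h1|[ij1 c1]];
case: (psi_psi_eq N2 (ltn_ord _) (ltn_ord _) y2 y'2 E2) => [h2|[ij2 c2]].
- by left; split => //; exists j => //; exists y' => //; rewrite !phiE h1 h2.
- right; split => //; apply: (endpoint_of_psi_eq N2 y1 y'1 h1) => ij1.
  by apply: ij; apply: eq_digit.
- right; split => //; apply: (endpoint_of_psi_eq N2 y2 y'2 h2) => ij2.
  by apply: ij; apply: eq_digit.
- by case: ij; apply: eq_digit.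
Qed.

Lemma cell_meet_eq_set1 x : contact x -> is_subset1 contact ->
  phi i @` F `&` union_cells (D :\ i) F = [set phi i x].
Proof.
move=> cx contact_subset1; apply/seteqP; split.
- by move=> _ [[y Fy <-] U]; rewrite (contact_subset1 y x).
- by move=> _ ->; case: cx => Fx Ux; split => //; exists x.
Qed.

Variable w : digit N * digit N.
Hypothesis w1D : w.1 \in D.
Hypothesis w_unique : forall d e q, d \in D -> e \in D -> F q ->
  contact (phi d (phi e q)) -> (d, e) = w.

Lemma contact_in_cell x : contact x ->
  exists q, [/\ F q, F (phi w.2 q) & x = phi w.1 (phi w.2 q)].
Proof.
move=> contact_x; have [d [y [dD Fy x_eq]]] := attractor_cover contact_x.1.
have [e [q [eD Fq y_eq]]] := attractor_cover Fy.
have := w_unique dD eD Fq; rewrite -y_eq -x_eq => /(_ contact_x) <-.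
by exists q; rewrite -y_eq.
Qed.

Lemma contact_sub_image_phi : w.1 = w.2 -> contact `<=` phi w.1 @` contact.
Proof.
move=> w12 x contact_x; have [q [Fq Fy x_eq]] := contact_in_cell contact_x.
rewrite x_eq in contact_x *.
have [contact_y|corner_y] := contact_shift w1D Fy contact_x.
  by exists (phi w.2 q).
have y_eq := cell_corner_fixed Fq corner_y.
by exists (phi w.2 q) => //; rewrite y_eq w12 in contact_x.
Qed.

Lemma contact_corner_decomp : w.1 != w.2 -> forall x, contact x ->
  exists q, [/\ F q, corner (phi w.2 q) & x = phi w.1 (phi w.2 q)].
Proof.
move=> w12 x contact_x; have [q [Fq Fy x_eq]] := contact_in_cell contact_x.
rewrite x_eq in contact_x.
have [contact_y|corner_y] := contact_shift w1D Fy contact_x; last by exists q.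
have [q' [_ Fq' y_eq]] := contact_in_cell contact_y.
rewrite y_eq in contact_x.
by move/eqP: w12; case; exact: (congr1 snd (w_unique w1D w1D Fq' contact_x)).
Qed.

Lemma contact_subset1 : is_subset1 contact.
Proof.
have [w12|w12] := eqVneq w.1 w.2.
  apply: (phi_invariant_subset1 N2 _ (contact_sub_image_phi w12)) => y [Fy _].
  exact: attractor_sub_unit_square.
move=> x x' /(contact_corner_decomp w12)[q [Fq cq ->]].
move=> /(contact_corner_decomp w12)[q' [Fq' cq' ->]].
by rewrite (cell_corner_unique Fq Fq' cq cq').
Qed.

End Contact.

End Attractor.

Lemma union_cells_set1 (R : realType) (N : nat) (F : set (R * R)) (i : digit N) :
  union_cells [set i]%SET F = phi i @` F.
Proof.
rewrite /union_cells -[in RHS](bigcup_set1 (fun j => phi j @` F) i).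
by congr bigcup; apply/seteqP; split => j; rewrite /= inE => /eqP.
Qed.

Lemma fragile_split_off (R : realType) (N : nat) (D : {set digit N})
    (F : set (R * R)) (i : digit N) (x : R * R) :
  i \in D -> (1 < #|D|)%N ->
  phi i @` F `&` union_cells (D :\ i) F = [set x] -> fragile D F.
Proof.
move=> iD D_gt1 meet; exists [set i]%SET, (D :\ i).
split; first by apply/setP => j; rewrite !inE; case: eqP.
split; first exact: finset.setD1K.
split; first by rewrite cards1.
split; first by move: D_gt1; rewrite (cardsD1 i D) iD add1n ltnS.
by exists x; rewrite union_cells_set1.
Qed.

Theorem mainTheorem14 (R : realType) (N : nat) (D : {set digit N})
  (F : set (R * R)) (i : digit N) :
  (2 <= N)%N -> (1 < #|D|)%N -> (#|D| < N ^ 2)%N ->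
  is_attractor D F ->
  connected F ->
  i \in D ->
  (exists w : digit N * digit N,
     [/\ w.1 \in D, w.2 \in D,
         (@phi R N i \o @phi R N w.1 \o @phi R N w.2) @` F
           `&` union_cells (D :\ i) F !=set0
       & forall w' : digit N * digit N,
           w'.1 \in D -> w'.2 \in D ->
           (@phi R N i \o @phi R N w'.1 \o @phi R N w'.2) @` F
             `&` union_cells (D :\ i) F !=set0 ->
           w' = w]) ->
  fragile D F.
Proof.
move=> N2 D_gt1 _ F_attr _ iD [w [w1D w2D [_ [[q Fq <-] meet_q]] w_uniq]].
have w_unique d e q' : d \in D -> e \in D -> F q' ->
    contact D F i (phi d (phi e q')) -> (d, e) = w.
  move=> dD eD Fq' [_ meet_q']; apply: w_uniq => //.
  by exists (phi i (phi d (phi e q'))); split => //; exists q'.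
apply: (fragile_split_off iD D_gt1 (cell_meet_eq_set1 (x := phi w.1 (phi w.2 q)) _ _)).
  by split => //; apply: (attractor_phi F_attr w1D); apply: (attractor_phi F_attr w2D).
exact: (contact_subset1 N2 F_attr w1D w_unique).
Qed.
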